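(* Let $T$ be a tree with exactly three pendant vertices $u_1,u_2,u_3$ and major vertex $m$, with $d(u_1,m)\equiv 0$, $d(u_2,m)\equiv 2$ and $d(u_3,m)\equiv 0\pmod 3$. Then there exists an eigenvector $x$ of $L(T)$ with eigenvalue $1$ such that for every $k\in\{1,2,3\}$ and every vertex $v$ on the path $P_{u_k,m}$ with $d(v,u_k)\equiv 1\pmod 3$, one has $x(v)=0$.
   Context: $L(T)=D(T)-A(T)$ is the Laplacian matrix of $T$. A pendant vertex has degree $1$; a major vertex has degree at least $3$. $P_{r,s}$ is the path in $T$ from $r$ to $s$, and $d$ denotes distance. *)

From mathcomp Require Import all_boot all_order all_algebra.
Set Implicit Arguments. Unset Strict Implicit. Unset Printing Implicit Defensive.
Import Order.TTheory GRing.Theory Num.Theory.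

Section Graphs.
Variable n : nat.
Variable e : rel 'I_n.

Definition simple_graph : Prop := symmetric e /\ irreflexive e.

Definition deg (v : 'I_n) : nat := #|[set w | e v w]|.
Definition pendant (v : 'I_n) : bool := deg v == 1%N.
Definition major (v : 'I_n) : bool := (3 <= deg v)%N.

(* walk from u to v given as its sequence of vertices after u *)
Definition walk (u v : 'I_n) (s : seq 'I_n) : bool := path e u s && (last u s == v).

Definition connected_graph : Prop := forall u v : 'I_n, exists s, walk u v s.

Definition acyclic : Prop :=
  forall s : seq 'I_n, (3 <= size s)%N -> uniq s -> ~~ cycle e s.

Definition is_tree : Prop := simple_graph /\ connected_graph /\ acyclic.

(* distance: least length k of a walk from u to v (#|T| if none exists) *)
Definition dist (u v : 'I_n) : nat :=
  find (fun k => [exists s : k.-tuple 'I_n, walk u v s]) (iota 0 n).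

(* v lies on the (vertex set of the) path P_{u,w}: some walk from u to w
   without repeated vertices passes through v *)
Definition on_path (u w v : 'I_n) : Prop :=
  exists s : seq 'I_n, [&& walk u w s, uniq (u :: s) & v \in u :: s].

Definition laplacian (R : nzRingType) : 'M[R]_n :=
  (\matrix_(i, j) ((if i == j then (deg i)%:R else 0) - (if e i j then 1 else 0)))%R.
End Graphs.

From mathcomp Require Import all_boot all_order all_algebra zify.
Set Implicit Arguments. Unset Strict Implicit. Unset Printing Implicit Defensive.
Import GRing.Theory.
Local Open Scope ring_scope.

(* Root T at m and write d v for d(v, m).  As T has only three pendant vertices and m is
   major, every branch of T at m is a path ending at one of u1, u2, u3, so every vertex
   other than m has degree at most 2.  The 6-periodic sequence s = 1, 1, 0, -1, -1, 0, ...
   satisfies s (k-1) + s (k+1) = s k and vanishes at k = 2 mod 3.  Put x v = s (d v) on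
   the branches of u1 and u3 and x v = s (d v + 1) on the branch of u2.  Then (L x)(v) = x v
   at the vertices of degree 2 by the recurrence, at the leaves because the congruences on
   d(u_k, m) make x vanish at their neighbours, and at m because exactly one neighbour of m,
   the one towards u2, carries the value 0.  The same congruences put the zeros of x on
   P_{u_k,m} at the vertices at distance 1 mod 3 from u_k. *)

Section Seq6.
Variable R : nzRingType.

Fixpoint seq6 (k : nat) : R := if k is (k'.+1 as k1).+1 then seq6 k1 - seq6 k' else 1.

Lemma seq6_rec k : seq6 k + seq6 k.+2 = seq6 k.+1.
Proof. by rewrite /= addrC subrK. Qed.

Lemma seq6_add3 k : seq6 k.+3 = - seq6 k.
Proof.
have -> : seq6 k.+3 = seq6 k.+2 - seq6 k.+1 by [].
by rewrite [seq6 k.+2]/= addrAC subrr add0r.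
Qed.

Lemma seq6_eq0 k : (k %% 3 = 2)%N -> seq6 k = 0.
Proof.
move=> hk; rewrite (divn_eq k 3) hk; elim: (k %/ 3)%N => [|j IH]; first by rewrite /= subrr.
by rewrite (_ : j.+1 * 3 + 2 = (j * 3 + 2).+3)%N ?seq6_add3 ?IH ?oppr0 //; lia.
Qed.

End Seq6.

Section Walks.
Variables (n : nat) (e : rel 'I_n).

Lemma walk_cat a b c s1 s2 : walk e a b s1 -> walk e b c s2 -> walk e a c (s1 ++ s2).
Proof.
rewrite /walk => /andP[p1 /eqP l1] /andP[p2 l2].
by rewrite cat_path p1 last_cat l1 p2.
Qed.

Lemma dist_le u v s : walk e u v s -> (dist e u v <= size s)%N.
Proof.
move=> w; rewrite /dist; case: (ltnP (size s) n) => hs.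
  rewrite leqNgt; apply/negP => /(before_find 0).
  by rewrite nth_iota // add0n => /negbT/negP; apply; apply/existsP; exists (in_tuple s).
by apply: leq_trans (find_size _ _) _; rewrite size_iota.
Qed.

Lemma dist_refl v : dist e v v = 0%N.
Proof. by apply/eqP; rewrite -leqn0 (@dist_le _ _ [::]) // /walk /=. Qed.

Lemma dist_lt_mem a b c s : walk e a b s -> c \in s -> (dist e c b < size s)%N.
Proof.
move=> + hc; case/splitPr: hc => s1 s2.
rewrite /walk cat_path last_cat /= => /andP[/and3P[_ _ p2] l2].
have := @dist_le c b s2; rewrite /walk p2 l2 size_cat /= => /(_ isT); lia.
Qed.

Lemma two_nbrs_avoiding v b : (3 <= deg e v)%N ->
  exists a1 a2, [/\ e v a1, e v a2, a1 != a2, a1 != b & a2 != b].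
Proof.
rewrite /deg => h; have : (1 < #|[set z | e v z] :\ b|)%N.
  by move: h; rewrite (cardsD1 b [set z | e v z]); case: (b \in _) => /=; lia.
case/card_gt1P=> a1 [a2 [+ + a12]]; rewrite !inE => /andP[? ?] /andP[? ?].
by exists a1, a2.
Qed.

Lemma laplacian_col (R : nzRingType) (x : 'cV[R]_n) i :
  (laplacian e R *m x) i 0 = (deg e i)%:R * x i 0 - \sum_(j in [set z | e i z]) x j 0.
Proof.
rewrite !mxE; under eq_bigr do rewrite !mxE mulrBl.
rewrite sumrB (bigD1 i) //= eqxx big1 ?addr0 => [|j /negPf ji]; last by rewrite eq_sym ji mul0r.
congr (_ - _); rewrite [RHS]big_mkcond /=; apply: eq_bigr => j _.
by rewrite inE; case: (e i j); rewrite ?mul1r ?mul0r.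
Qed.

Hypothesis sym_e : symmetric e.

Lemma walk_rev a b s : walk e a b s -> walk e b a (rev (belast a s)).
Proof.
rewrite /walk => /andP[p /eqP l]; apply/andP; split.
  by rewrite -l rev_path; apply: sub_path p => x y; rewrite sym_e.
by case: s p l => [|x s] /= _ <-; rewrite ?rev_cons ?last_rcons.
Qed.

Hypothesis conn : connected_graph e.

Lemma dist_walk u v : exists s, walk e u v s /\ size s = dist e u v.
Proof.
have [s0 /andP[p0 /eqP l0]] := conn u v.
case: (shortenP p0) l0 => s p /card_uniqP us _ l.
have hs : (size s < n)%N.
  by rewrite -[X in (_ < X)%N]card_ord -[(size s).+1]/(size (u :: s)) -us max_card.
have hP : has (fun k => [exists t : k.-tuple 'I_n, walk e u v t]) (iota 0 n).
  apply/hasP; exists (size s); first by rewrite mem_iota.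
  by apply/existsP; exists (in_tuple s); rewrite /walk p l eqxx.
have := nth_find 0 hP; rewrite has_find size_iota in hP.
by rewrite nth_iota // add0n => /existsP[t wt]; exists t; rewrite size_tuple.
Qed.

Lemma dist_eq0 u v : dist e u v = 0%N -> u = v.
Proof. by have [s [/andP[_ /eqP <-]]] := dist_walk u v => <- /size0nil ->. Qed.

Lemma dist_edge w u v : e u v -> (dist e u w <= (dist e v w).+1)%N.
Proof.
have [s [w' <-]] := dist_walk v w => huv.
by apply: (@dist_le _ _ (v :: s)); move: w'; rewrite /walk /= huv.
Qed.

Lemma dist_sym u v : dist e u v = dist e v u.
Proof.
suff le u' v' : (dist e u' v' <= dist e v' u')%N by apply/eqP; rewrite eqn_leq !le.
have [s [/walk_rev w <-]] := dist_walk v' u'.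
by rewrite -(size_belast v') -size_rev dist_le.
Qed.

Lemma dist_triangle u v w : (dist e u w <= dist e u v + dist e v w)%N.
Proof.
have [s1 [w1 <-]] := dist_walk u v; have [s2 [w2 <-]] := dist_walk v w.
by rewrite -size_cat dist_le // (walk_cat w1 w2).
Qed.

End Walks.

Section RootedTree.
Variables (n : nat) (e : rel 'I_n).
Hypotheses (sym_e : symmetric e) (irr_e : irreflexive e).
Hypotheses (conn : connected_graph e) (acyc : acyclic e).
Variable m : 'I_n.
Local Notation d y := (dist e y m).

Lemma d_gt0 y : (0 < d y)%N = (y != m).
Proof.
apply/idP/idP => [|ym]; first by apply: contraTneq => ->; rewrite dist_refl.
by rewrite lt0n; apply: contra ym => /eqP/(dist_eq0 conn)->.
Qed.

Lemma no_two_walks_avoiding c a b s1 s2 : e c a -> e c b -> a != b ->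
  walk e a m s1 -> c \notin a :: s1 -> walk e b m s2 -> c \notin b :: s2 -> False.
Proof.
move=> hca hcb hab w1 n1 w2 n2.
case/andP: (walk_cat w1 (walk_rev sym_e w2)) => p /eqP l.
case: (shortenP p) l => s p' u' sub' l'.
have nc : c \notin a :: s.
  rewrite inE negb_or eq_sym (memPn n1 _ (mem_head _ _)) /=.
  apply/negP => /sub'; rewrite mem_cat mem_rev => /orP[cs1|/mem_belast cs2].
    by rewrite inE cs1 orbT in n1.
  by rewrite cs2 in n2.
have hs : (3 <= size (c :: a :: s))%N.
  by case: s l' {p' u' sub' nc} => [/= ab|//]; rewrite ab eqxx in hab.
have hu : uniq (c :: a :: s) by rewrite cons_uniq nc u'.
have hc : cycle e (c :: a :: s) by rewrite /cycle /= hca rcons_path p' l' /= sym_e hcb.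
by move: (acyc hs hu); rewrite hc.
Qed.

Lemma nbrs_closer_eq c a b : e c a -> e c b -> (d a <= d c)%N -> (d b <= d c)%N -> a = b.
Proof.
move=> hca hcb la lb; apply/eqP/negPn/negP => hab.
have [s1 [w1 h1]] := dist_walk conn a m; have [s2 [w2 h2]] := dist_walk conn b m.
have avoid x s : e c x -> walk e x m s -> size s = d x -> (d x <= d c)%N -> c \notin x :: s.
  move=> hcx wx hx lx; rewrite inE negb_or; apply/andP; split.
    by apply: contraTneq hcx => ->; rewrite irr_e.
  by apply/negP => /(dist_lt_mem wx); lia.
exact: (no_two_walks_avoiding hca hcb hab w1 (avoid _ _ hca w1 h1 la) w2 (avoid _ _ hcb w2 h2 lb)).
Qed.

(* [par m = m] *)
Definition par y := odflt y [pick z | e y z && ((d z).+1 == d y)].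

Lemma par_spec y : y != m -> e y (par y) /\ (d (par y)).+1 = d y.
Proof.
move=> ym; have [[|z s] [w hs]] := dist_walk conn y m.
  by move: w ym; rewrite /walk /= => /eqP ->; rewrite eqxx.
case/andP: w => /= /andP[hyz pz] lz.
have := @dist_le _ e z m s; rewrite /walk pz lz /= => /(_ isT) hz.
have := dist_edge conn m hyz; rewrite /par; case: pickP => [z' /andP[? /eqP]|] // /(_ z).
by rewrite hyz -hs /=; lia.
Qed.

Lemma d_par y : d (par y) = (d y).-1.
Proof.
have [->|/par_spec[_ <-] //] := eqVneq y m.
by rewrite /par; case: pickP => [z /andP[_ /eqP]|_] /=; rewrite dist_refl.
Qed.

Lemma edge_par y : y != m -> e y (par y).
Proof. by case/par_spec. Qed.

Lemma par_nbr y z : e y z -> d z = (d y).+1 -> par z = y.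
Proof.
move=> hyz hdz; have zm : z != m by rewrite -d_gt0 hdz.
by apply: nbrs_closer_eq (edge_par zm) _ _ _; rewrite 1?sym_e // ?d_par hdz //.
Qed.

Lemma d_edge y z : e y z -> d z = (d y).+1 \/ d y = (d z).+1.
Proof.
move=> hyz; have := dist_edge conn m hyz; rewrite sym_e in hyz.
have := dist_edge conn m hyz; case: (ltngtP (d y) (d z)); try lia.
move=> hd _ _; exfalso; have [ym|ym] := eqVneq y m.
  by move: hd hyz; rewrite ym dist_refl => /esym/(dist_eq0 conn)->; rewrite irr_e.
have hp := par_spec ym; rewrite sym_e in hyz.
have pz : par y = z by apply: nbrs_closer_eq hp.1 hyz _ _; lia.
by move: hp.2 hd; rewrite pz; lia.
Qed.

Lemma d_nbr_npar y z : e y z -> z != par y -> d z = (d y).+1.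
Proof.
move=> hyz; case: (d_edge hyz) => // hd; rewrite sym_e in hyz.
by rewrite (par_nbr hyz hd) eqxx.
Qed.

Lemma d_iter j y : d (iter j par y) = (d y - j)%N.
Proof. by elim: j => [|j IH]; rewrite ?subn0 // iterS d_par IH; lia. Qed.

Definition anc k y := iter (d y - k) par y.

Lemma d_anc k y : (k <= d y)%N -> d (anc k y) = k.
Proof. by rewrite /anc d_iter; lia. Qed.

Lemma anc_self y : anc (d y) y = y.
Proof. by rewrite /anc subnn. Qed.

Lemma anc_anc j k y : (j <= k)%N -> (k <= d y)%N -> anc j (anc k y) = anc j y.
Proof. by move=> hjk hk; rewrite {1}/anc d_anc // /anc -iterD; congr iter; lia. Qed.

Lemma anc_par k z : (k < d z)%N -> anc k (par z) = anc k z.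
Proof.
by move=> hk; rewrite /anc d_par (_ : d z - k = ((d z).-1 - k).+1)%N ?iterSr //; lia.
Qed.

Lemma iter_parE j y : (j <= d y)%N -> iter j par y = anc (d y - j) y.
Proof. by move=> hj; rewrite /anc subKn. Qed.

Lemma walk_iter_par j y : (j <= d y)%N -> walk e y (iter j par y) (traject par (par y) j).
Proof.
elim: j y => [|j IH] y hj; first by rewrite /walk /= eqxx.
have ym : y != m by rewrite -d_gt0; lia.
have /andP[p l] := IH (par y) ltac:(rewrite d_par; lia).
by rewrite /walk /= edge_par // p -iterS iterSr.
Qed.

Lemma dist_iter_par j y : (j <= d y)%N -> dist e (iter j par y) y = j.
Proof.
move=> hj; apply/eqP; rewrite eqn_leq; apply/andP; split.
  by have := dist_le (walk_iter_par hj); rewrite size_traject (dist_sym sym_e conn).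
have := dist_triangle conn y (iter j par y) m.
by rewrite d_iter (dist_sym sym_e conn (iter j par y)); lia.
Qed.

Lemma uniq_walk_traject y s : walk e y m s -> uniq (y :: s) -> y :: s = traject par y (d y).+1.
Proof.
elim: s y => [|z s IH] y; first by rewrite /walk /= => /eqP ->; rewrite dist_refl.
rewrite /walk /= => /andP[/andP[hyz pz] lz] /andP[ny uz].
have wz : walk e z m s by rewrite /walk pz lz.
have ym : y != m by apply: contraNneq ny => ->; rewrite -(eqP lz) mem_last.
have [hp hdp] := par_spec ym.
suff zp : z = par y by rewrite (IH z wz uz) zp -hdp.
apply/eqP/negPn/negP => nz.
have [g [wg hg]] := dist_walk conn (par y) m.
apply: (no_two_walks_avoiding hyz hp nz wz ny wg).
rewrite inE negb_or; apply/andP; split; first by apply: contraTneq hp => <-; rewrite irr_e.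
by apply/negP => /(dist_lt_mem wg); rewrite hg -hdp ltnNge leqnSn.
Qed.

Lemma pendant_childless y : y != m -> (forall z, e y z -> z = par y) -> pendant e y.
Proof.
move=> ym h; rewrite /pendant /deg (_ : [set z | e y z] = [set par y]) ?cards1 //.
by apply/setP => z; rewrite !inE; apply/idP/eqP => [/h|->]; last exact: edge_par.
Qed.

Lemma exists_leaf_below w : w != m ->
  exists y, [/\ (d w <= d y)%N, anc (d w) y = w & pendant e y].
Proof.
move=> wm; pose S := [set y | (d w <= d y)%N && (anc (d w) y == w)].
have wS : w \in S by rewrite inE leqnn anc_self eqxx.
have [y yS ymax] := @arg_maxnP _ w (fun y => y \in S) (fun y => d y) wS.
move: (yS); rewrite inE => /andP[hy /eqP hay].
have ym : y != m by rewrite -d_gt0; move: wm; rewrite -d_gt0; lia.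
exists y; split => //; apply: pendant_childless => // z hyz.
apply/eqP/negPn/negP => /(d_nbr_npar hyz) hdz.
have zS : z \in S.
  rewrite inE hdz -anc_par ?hdz ?ltnS // (par_nbr hyz hdz) hay eqxx andbT; lia.
by have := ymax z zS; rewrite hdz; lia.
Qed.

Definition branch y := anc 1 y.

Lemma branch_anc k y : (0 < k <= d y)%N -> branch (anc k y) = branch y.
Proof. by case/andP=> hk hky; rewrite /branch anc_anc. Qed.

Lemma d_nbr_root z : e m z -> d z = 1%N.
Proof.
have par_root : par m = m by apply: (dist_eq0 conn); rewrite d_par dist_refl.
move=> hmz; rewrite (d_nbr_npar hmz) ?dist_refl //.
by apply: contraTneq hmz => ->; rewrite par_root irr_e.
Qed.

Lemma branch_d1 z : d z = 1%N -> branch z = z.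
Proof. by move=> hz; rewrite /branch -{1}hz anc_self. Qed.

Section ThreeLeaves.
Variables u1 u2 u3 : 'I_n.
Hypothesis pendantE : forall v, pendant e v = (v \in [:: u1; u2; u3]).
Hypothesis major_m : major e m.

Lemma pendant_neq_root v : pendant e v -> v != m.
Proof. by move=> /eqP dv1; apply: contraTneq major_m => <-; rewrite /major dv1. Qed.

Lemma pendants_le3 s : uniq s -> all (pendant e) s -> (size s <= 3)%N.
Proof.
move=> us /allP ps; apply: (uniq_leq_size (s2 := [:: u1; u2; u3])) => // v /ps.
by rewrite pendantE.
Qed.

Lemma two_leaves_off_branch b : exists l1 l2,
  [/\ l1 != l2, branch l1 != b, branch l2 != b, pendant e l1 & pendant e l2].
Proof.
have [a1 [a2 [e1 e2 a12 a1b a2b]]] := two_nbrs_avoiding b major_m.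
have [d1 d2] := (d_nbr_root e1, d_nbr_root e2).
have [l1 [_ al1 p1]] := exists_leaf_below (w := a1) ltac:(by rewrite -d_gt0 d1).
have [l2 [_ al2 p2]] := exists_leaf_below (w := a2) ltac:(by rewrite -d_gt0 d2).
have b1 : branch l1 = a1 by rewrite /branch -d1 al1.
have b2 : branch l2 = a2 by rewrite /branch -d2 al2.
exists l1, l2; rewrite b1 b2; split => //.
by apply: contra a12 => /eqP l12; rewrite -b1 -b2 l12.
Qed.

Lemma pendant_branch_inj a b : a != b -> pendant e a -> pendant e b -> branch a != branch b.
Proof.
move=> ab pa pb; apply/negP => /eqP bab.
have [l1 [l2 [l12 bl1 bl2 p1 p2]]] := two_leaves_off_branch (branch a).
have off l : branch l != branch a -> (a != l) && (b != l).
  by move=> bl; apply/andP; split; apply: contraNneq bl => <-; rewrite ?bab.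
have := @pendants_le3 [:: a; b; l1; l2]; rewrite /= !inE !negb_or ab l12 pa pb p1 p2.
by case/andP: (off _ bl1) => -> ->; case/andP: (off _ bl2) => -> -> /(_ isT isT).
Qed.

Lemma deg_nroot_le2 y : y != m -> (deg e y <= 2)%N.
Proof.
move=> ym; rewrite leqNgt; apply/negP.
case/(two_nbrs_avoiding (par y)) => [c1 [c2 [e1 e2 c12 c1p c2p]]].
have leaf_below c : e y c -> c != par y ->
    exists l, [/\ pendant e l, branch l = branch y & anc (d y).+1 l = c].
  move=> hyc hcp; have hdc := d_nbr_npar hyc hcp.
  have [l [hl alc pl]] := exists_leaf_below (w := c) ltac:(by rewrite -d_gt0 hdc).
  exists l; rewrite -hdc; split => //.
  rewrite -(branch_anc (k := d c)) ?hl ?alc ?hdc // /branch -anc_par ?(par_nbr hyc hdc) //.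
  by rewrite hdc ltnS d_gt0.
have [l1 [p1 b1 a1]] := leaf_below c1 e1 c1p.
have [l2 [p2 b2 a2]] := leaf_below c2 e2 c2p.
have l12 : l1 != l2 by apply: contra c12 => /eqP l12; rewrite -a1 -a2 l12.
by have := pendant_branch_inj l12 p1 p2; rewrite b1 b2 eqxx.
Qed.

Section Eigenvector.
Hypothesis u_uniq : uniq [:: u1; u2; u3].
Hypothesis d_u1 : (d u1 %% 3 = 0)%N.
Hypothesis d_u2 : (d u2 %% 3 = 2)%N.
Hypothesis d_u3 : (d u3 %% 3 = 0)%N.

Definition on_u2_branch v := (v != m) && (branch v == branch u2).

Lemma on_u2_branch_iter j v : (j < d v)%N -> on_u2_branch (iter j par v) = on_u2_branch v.
Proof.
move=> hj; have [h0 h1] : (0 < d v - j)%N /\ (0 < d v)%N by lia.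
by rewrite /on_u2_branch -!d_gt0 d_iter h0 h1 iter_parE ?branch_anc ?h0 ?leq_subr // ltnW.
Qed.

Definition phase v := (d v + on_u2_branch v)%N.

Lemma phase_leaf k : k \in [:: u1; u2; u3] -> (phase k %% 3 = 0)%N.
Proof.
have pu v : v \in [:: u1; u2; u3] -> pendant e v by rewrite pendantE.
have off_u2 k' : k' \in [:: u1; u2; u3] -> k' != u2 -> on_u2_branch k' = false.
  move=> hk' k'u2; rewrite /on_u2_branch.
  by rewrite (negbTE (pendant_branch_inj k'u2 (pu _ hk') (pu u2 _))) ?andbF // !inE eqxx orbT.
rewrite /phase; move: u_uniq; rewrite /= !inE !negb_or andbT.
move=> /andP[/andP[u12 _] u23] /or3P[] /eqP ->.
- by rewrite off_u2 ?addn0 // !inE eqxx.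
- have u2m : u2 != m by apply/pendant_neq_root/pu; rewrite !inE eqxx orbT.
  by rewrite /on_u2_branch eqxx andbT u2m addn1; lia.
- by rewrite off_u2 ?addn0 ?inE ?eqxx ?orbT // eq_sym.
Qed.

Variable R : nzRingType.

Definition xval v : R := seq6 R (phase v).

Definition eigvec : 'cV[R]_n := \col_v xval v.

Lemma xval_root : xval m = 1.
Proof. by rewrite /xval /phase /on_u2_branch eqxx dist_refl. Qed.

Lemma xval_par v : v != m -> xval (par v) = seq6 R ((d v).-1 + on_u2_branch v).
Proof.
rewrite -d_gt0 => hv; have [hv1|hv1] : (1 < d v)%N \/ d v = 1%N by lia.
  by rewrite /xval /phase d_par (on_u2_branch_iter (j := 1)).
have -> : par v = m by apply: (dist_eq0 conn); rewrite d_par hv1.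
by rewrite xval_root hv1; case: (on_u2_branch v).
Qed.

Lemma xval_child v c : v != m -> e v c -> c != par v ->
  xval c = seq6 R ((d v).+1 + on_u2_branch v).
Proof.
move=> vm hvc hcp; have hdc := d_nbr_npar hvc hcp.
rewrite /xval /phase hdc -(on_u2_branch_iter (j := 1) (v := c)) /= ?(par_nbr hvc hdc) //.
by rewrite hdc ltnS d_gt0.
Qed.

Lemma lap_eigvec_root :
  (deg e m)%:R * xval m - \sum_(j in [set z | e m z]) xval j = xval m.
Proof.
set N := [set z | e m z]; set b := branch u2.
have u2m : u2 != m by apply/pendant_neq_root; rewrite pendantE !inE eqxx orbT.
have db : d b = 1%N by rewrite d_anc // d_gt0.
have bm : b != m by rewrite -d_gt0 db.
have bN : b \in N.
  have pb : par b = m by apply: (dist_eq0 conn); rewrite d_par db.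
  by rewrite inE sym_e -{1}pb edge_par.
rewrite (big_setD1 b) //= (_ : xval b = 0); last first.
  by rewrite /xval /phase /on_u2_branch bm branch_d1 // eqxx db /= subrr.
rewrite add0r (eq_bigr (fun=> 1)) => [|j]; last first.
  rewrite !inE => /andP[jb ej]; have dj := d_nbr_root ej.
  by rewrite /xval /phase /on_u2_branch branch_d1 // (negbTE jb) andbF dj.
by rewrite sumr_const /deg -/N (cardsD1 b N) bN xval_root mulr1 natrD addrK.
Qed.

Lemma lap_eigvec_nroot i : i != m ->
  (deg e i)%:R * xval i - \sum_(j in [set z | e i z]) xval j = xval i.
Proof.
move=> im; set N := [set z | e i z].
have pN : par i \in N by rewrite inE edge_par.
have hi : (0 < d i)%N by rewrite d_gt0.
have := deg_nroot_le2 im; rewrite /deg -/N (cardsD1 (par i)) pN.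
rewrite (big_setD1 (par i)) //= xval_par //.
case E: #|N :\ par i| => [|[|k]] // _.
  have pi : pendant e i by rewrite /pendant /deg -/N (cardsD1 (par i)) pN E.
  have hph := phase_leaf (k := i) ltac:(by rewrite -pendantE).
  rewrite (_ : N :\ par i = set0); last by apply/eqP; rewrite -cards_eq0 E.
  by rewrite big_set0 addr0 seq6_eq0 ?subr0 ?mul1r //; move: hph; rewrite /phase; lia.
have /cards1P [c hc] : #|N :\ par i| == 1%N by rewrite E.
have : c \in N :\ par i by rewrite hc inE.
rewrite !inE => /andP[cp ec].
rewrite hc big_set1 (xval_child im ec cp) /xval /phase.
case: (d i) hi => // k' _; rewrite !addSn seq6_rec.
by rewrite mulr2n mulrDl mul1r addrK.
Qed.

Lemma eigvec_lap : laplacian e R *m eigvec = eigvec.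
Proof.
apply/matrixP => i j; rewrite ord1 laplacian_col !mxE.
under eq_bigr do rewrite mxE.
by have [->|im] := eqVneq i m; [apply: lap_eigvec_root | apply: lap_eigvec_nroot].
Qed.

Lemma eigvec_neq0 : eigvec != 0.
Proof.
apply/eqP => /matrixP/(_ m 0); rewrite !mxE xval_root => /eqP.
by rewrite oner_eq0.
Qed.

Lemma eigvec_path_zero k v : k \in [:: u1; u2; u3] -> on_path e k m v ->
  (dist e v k %% 3 = 1)%N -> eigvec v 0 = 0.
Proof.
move=> hk [s /and3P[w us]]; rewrite (uniq_walk_traject w us) => /trajectP[j hj ->].
rewrite dist_iter_par; last by rewrite -ltnS.
move=> hj1; have hph := phase_leaf hk.
have jk : (j < d k)%N.
  by move: hph hj1 hj; rewrite /phase; case: (on_u2_branch k); lia.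
by rewrite mxE /xval /phase d_iter on_u2_branch_iter // seq6_eq0 //; move: hph; rewrite /phase; lia.
Qed.

End Eigenvector.

End ThreeLeaves.

End RootedTree.

Unset Implicit Arguments.

Theorem mainTheorem8 (R : realFieldType) (n : nat) (e : rel 'I_n)
  (u1 u2 u3 m : 'I_n) :
  is_tree e ->
  uniq [:: u1; u2; u3] ->
  (forall v, pendant e v = (v \in [:: u1; u2; u3])) ->
  major e m ->
  (dist e u1 m %% 3 = 0)%N ->
  (dist e u2 m %% 3 = 2)%N ->
  (dist e u3 m %% 3 = 0)%N ->
  exists x : 'cV[R]_n,
    [/\ x != 0, laplacian e R *m x = x &
      forall (k : 'I_n) (v : 'I_n), k \in [:: u1; u2; u3] ->
        on_path e k m v -> (dist e v k %% 3 = 1)%N -> x v 0 = 0].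
Proof.
move=> [[sym_e irr_e] [conn acyc]] u_uniq pendantE major_m d_u1 d_u2 d_u3.
exists (eigvec e m u2 R); split.
- exact: eigvec_neq0.
- exact: eigvec_lap.
- exact: eigvec_path_zero.
Qed.
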